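(* For every integer $k\ge2$, $\inf_{x\in\Delta^{d-1}}F^k(x)=12\cdot3^{k-1}-3$, and this value is attained at the barycenter $x=(1/d,\dots,1/d)$.
   Context: Fix $k\ge2$ and $d=4\cdot3^{k-1}$. $\Delta^{d-1}=\{x\in\mathbb{R}^d: x_i>0,\ \sum_i x_i=1\}$. For $j=1,2,3,4$, $I_j=\{(j-1)3^{k-1}+1,\dots,j\cdot3^{k-1}\}$ and $\Sigma_j(x)=\sum_{l\in I_j}x_l$. Let $\sigma(t)=(1-t)/t$. For $i\in\{1,\dots,d\}$ let $j(i)=1,4,3,2$ according as $i\equiv0,1,2,3\pmod4$, $f_i(x)=\sigma(\Sigma_{j(i)}(x))\sigma(x_i)$, and $F^k(x)=\max_{1\le i\le d}f_i(x)$. *)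

From HB Require Import structures.
From mathcomp Require Import all_boot all_order all_algebra.
Unset Printing Implicit Defensive.
Import Order.TTheory GRing.Theory Num.Theory.
Local Open Scope ring_scope.

Definition dimd (k : nat) : nat := (4 * 3 ^ (k - 1))%N.

Lemma dimd_gt0 k : (0 < dimd k)%N.
Proof. by rewrite /dimd muln_gt0 expn_gt0. Qed.

Definition in_simplex (R : realFieldType) (n : nat) (x : 'I_n -> R) : Prop :=
  (forall i, 0 < x i) /\ \sum_(i < n) x i = 1.

(* Paper index l (1-based) = l0 + 1 with l0 : 'I_d.
   l in I_j  <=>  (j-1) 3^(k-1) + 1 <= l <= j 3^(k-1)  <=>  l0 %/ 3^(k-1) = j-1. *)
Definition Sigma (R : realFieldType) (k : nat) (j : nat) (x : 'I_(dimd k) -> R) : R :=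
  \sum_(l < dimd k | (l %/ 3 ^ (k - 1) == j.-1)%N) x l.

Definition sigma (R : realFieldType) (t : R) : R := (1 - t) / t.

Definition jmap (i : nat) : nat :=
  match (i %% 4)%N with
  | 0 => 1%N | 1 => 4%N | 2 => 3%N | _ => 2%N
  end.

(* f_i for 0-based i0 (paper index i = i0 + 1). *)
Definition fk (R : realFieldType) (k : nat) (i : 'I_(dimd k)) (x : 'I_(dimd k) -> R) : R :=
  sigma R (Sigma R k (jmap i.+1) x) * sigma R (x i).

Definition Fk (R : realFieldType) (k : nat) (x : 'I_(dimd k) -> R) : R :=
  \big[Num.max/fk R k (Ordinal (dimd_gt0 k)) x]_(i < dimd k) fk R k i x.

Definition barycenter (R : realFieldType) (k : nat) : 'I_(dimd k) -> R :=
  fun _ => (dimd k)%:R^-1.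

From HB Require Import structures.
From mathcomp Require Import all_boot all_order all_algebra.
From mathcomp Require Import ring lra.
Import Order.TTheory GRing.Theory Num.Theory.
Local Open Scope ring_scope.

(* Put m = 3^(k-1), M = 12 m - 3 and a_j = Sigma_j(x).  If F^k(x) < M, each
   inequality f_i(x) < M rearranges to x_i > phi(a_j(i)) with
   phi(a) = (1 - a) / (1 + (M - 1) a).  The function phi is convex, so it lies
   above its tangent line L at a = 1/4, where phi(1/4) = 1/(4m).  Every value
   of j(.) in {1,..,4} is taken exactly m times, hence
   1 = sum_i x_i > m (L(a_1) + ... + L(a_4)) = m * 4 * L(1/4) = 1, since L is
   affine and the a_j sum to 1.  At the barycenter every a_j is 1/4 and every
   x_i is 1/(4m), so every f_i equals 3 (4m - 1) = M. *)

Lemma sum_modn {V : nmodType} (n m : nat) (G : nat -> V) :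
  \sum_(i < n * m) G (i %% n)%N = (\sum_(r < n) G r) *+ m.
Proof.
elim: m => [|m IH]; first by rewrite muln0 big_ord0.
rewrite mulnS big_split_ord /= mulrS -IH; congr (_ + _).
  by apply: eq_bigr => i _; rewrite modn_small.
by apply: eq_bigr => i _; rewrite modnDl.
Qed.

Lemma card_divn_eq (n m q : nat) : (0 < m)%N -> (q < n)%N ->
  #|[pred l : 'I_(n * m) | (l %/ m == q)%N]| = m.
Proof.
move=> m_gt0 q_lt_n.
have le_qm_nm : (q * m + m <= n * m)%N by rewrite -mulSnr leq_pmul2r.
pose f (r : 'I_m) := widen_ord le_qm_nm (rshift (q * m) r).
have f_inj : injective f by move=> r s /(congr1 val) /= /addnI /val_inj.
rewrite -[RHS]card_ord -(card_image f_inj); apply: eq_card => l; rewrite inE /=.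
apply/eqP/imageP => [l_q | [r _ ->]]; last first.
  by rewrite /= divnMDl // divn_small // addn0.
exists (Ordinal (ltn_pmod l m_gt0)) => //; apply: val_inj.
by rewrite /= {1}(divn_eq l m) l_q.
Qed.

Lemma sum_divn_partition {V : nmodType} (n m : nat) (x : 'I_(n * m) -> V) :
  (0 < m)%N ->
  \sum_(l < n * m) x l = \sum_(q < n) \sum_(l < n * m | (l %/ m == q)%N) x l.
Proof.
move=> m_gt0.
have lt_div (l : 'I_(n * m)) : (l %/ m < n)%N by rewrite ltn_divLR // mulnC.
by rewrite (partition_big (fun l => Ordinal (lt_div l)) xpredT).
Qed.

Lemma jmapS_modn (i : nat) : jmap i.+1 = jmap (i %% 4).+1.
Proof. by rewrite /jmap -[i.+1]addn1 -modnDml addn1. Qed.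

Lemma jmap_le4 (n : nat) : (jmap n <= 4)%N.
Proof. by rewrite /jmap; case: (n %% 4)%N => [|[|[|n']]]. Qed.

Section Blocks.
Variables (R : realFieldType) (k : nat).
Let m := (3 ^ (k - 1))%N.
Let m_gt0 : (0 < m)%N. Proof. by rewrite expn_gt0. Qed.

Lemma sum_jmap (G : nat -> R) :
  \sum_(i < dimd k) G (jmap i.+1) = (\sum_(q < 4) G q.+1) *+ m.
Proof.
under eq_bigr do rewrite jmapS_modn.
rewrite (sum_modn 4 m (fun r => G (jmap r.+1))) !big_ord_recr !big_ord0 /= /jmap /=.
by congr (_ *+ _); ring.
Qed.

Lemma sum_Sigma (x : 'I_(dimd k) -> R) :
  \sum_(q < 4) Sigma R k q.+1 x = \sum_(i < dimd k) x i.
Proof. by rewrite [RHS](sum_divn_partition 4 m _ m_gt0). Qed.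

Lemma Sigma_gt0 (j : nat) (x : 'I_(dimd k) -> R) :
  (j <= 4)%N -> (forall i, 0 < x i) -> 0 < Sigma R k j x.
Proof.
move=> j_le4 x_gt0; have j_lt4 : (j.-1 < 4)%N by case: j j_le4.
have /card_gt0P[l l_j] : (0 < #|[pred l : 'I_(4 * m) | (l %/ m == j.-1)%N]|)%N.
  by rewrite card_divn_eq.
rewrite /Sigma (bigD1 l l_j) /= ltr_pwDl // sumr_ge0 // => i _; exact: ltW.
Qed.

Lemma Sigma_barycenter (j : nat) : (j <= 4)%N -> Sigma R k j (barycenter R k) = 4^-1.
Proof.
move=> j_le4; have j_lt4 : (j.-1 < 4)%N by case: j j_le4.
rewrite /Sigma /barycenter sumr_const card_divn_eq // /dimd -/m natrM.
by field; rewrite pnatr_eq0 -lt0n.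
Qed.

End Blocks.

Lemma sigma_mul_lt {R : realFieldType} {a y M : R} :
  0 < a -> 0 < y -> sigma R a * sigma R y < M -> 1 - a < y * (1 + (M - 1) * a).
Proof.
move=> a_gt0 y_gt0; rewrite /sigma mulf_div ltr_pdivrMr ?mulr_gt0 // => lt_M; nra.
Qed.

(* With M = 12 m - 3, the line is the tangent of phi at 1/4. *)
Lemma tangent_le {R : realFieldType} (m a : R) : 1 <= 3 * m -> 0 <= a ->
  ((4 * m)^-1 - (12 * m - 3) / (9 * m ^+ 2) * (a - 4^-1)) * (1 + (12 * m - 3 - 1) * a)
  <= 1 - a.
Proof.
move=> m_ge a_ge0; have m_neq0 : m != 0 by apply: lt0r_neq0; lra.
rewrite -subr_ge0.
have -> : 1 - a - ((4 * m)^-1 - (12 * m - 3) / (9 * m ^+ 2) * (a - 4^-1))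
                   * (1 + (12 * m - 3 - 1) * a)
          = (12 * m - 3) / (9 * m ^+ 2) * (12 * m - 4) * (a - 4^-1) ^+ 2 by field.
rewrite mulr_ge0 ?sqr_ge0 // mulr_ge0 ?divr_ge0 ?mulr_ge0 ?sqr_ge0 //; lra.
Qed.

Section Bounds.
Variables (R : realFieldType) (k : nat).

Lemma Fk_ge (x : 'I_(dimd k) -> R) :
  in_simplex R (dimd k) x -> 12 * 3 ^+ (k - 1) - 3 <= Fk R k x.
Proof.
move=> [x_gt0 x_sum]; set m := (3 ^ (k - 1))%N.
have m_ge1 : 1 <= m%:R :> R by rewrite ler1n expn_gt0.
rewrite -natrX leNgt; apply/negP => Fk_lt.
set M := 12 * m%:R - 3 in Fk_lt.
pose c := M / (9 * m%:R ^+ 2).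
pose L t := (4 * m%:R)^-1 - c * (t - 4^-1).
have L_lt (i : 'I_(dimd k)) : L (Sigma R k (jmap i.+1) x) < x i.
  have a_gt0 : 0 < Sigma R k (jmap i.+1) x by apply: Sigma_gt0 (jmap_le4 _) x_gt0.
  have factor_gt0 : 0 < 1 + (M - 1) * Sigma R k (jmap i.+1) x.
    by rewrite ltr_pwDl // mulr_ge0 ?ltW //; rewrite /M; lra.
  rewrite -(ltr_pM2r factor_gt0).
  apply: le_lt_trans (tangent_le m%:R _ _ (ltW a_gt0)) _; first lra.
  exact: sigma_mul_lt a_gt0 (x_gt0 i) (le_lt_trans (le_bigmax _ _ i) Fk_lt).
have L_sum : \sum_(i < dimd k) L (Sigma R k (jmap i.+1) x) = 1.
  rewrite (sum_jmap _ _ (fun j => L (Sigma R k j x))) sumrB -mulr_sumr sumrB.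
  rewrite !sumr_const card_ord sum_Sigma x_sum -/m.
  by field; rewrite pnatr_eq0 -lt0n expn_gt0.
have : \sum_(i < dimd k) L (Sigma R k (jmap i.+1) x) < \sum_i x i.
  apply: ltr_sum => [|i _]; last exact: L_lt.
  by apply/hasP; exists (Ordinal (dimd_gt0 k)); first exact: mem_index_enum.
by rewrite L_sum x_sum ltxx.
Qed.

Lemma barycenter_in_simplex : in_simplex R (dimd k) (barycenter R k).
Proof.
split=> [i|]; first by rewrite invr_gt0 ltr0n dimd_gt0.
rewrite sumr_const card_ord.
by field; rewrite pnatr_eq0 -lt0n dimd_gt0.
Qed.

Lemma fk_barycenter (i : 'I_(dimd k)) :
  fk R k i (barycenter R k) = 12 * 3 ^+ (k - 1) - 3.
Proof.
rewrite /fk Sigma_barycenter ?jmap_le4 // /sigma /barycenter /dimd natrM -natrX.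
by field; rewrite pnatr_eq0 -lt0n expn_gt0.
Qed.

Lemma Fk_barycenter : Fk R k (barycenter R k) = 12 * 3 ^+ (k - 1) - 3.
Proof.
apply/le_anti/andP; split; last by rewrite -(fk_barycenter (Ordinal (dimd_gt0 k))) le_bigmax.
by apply: bigmax_le => [|i _]; rewrite fk_barycenter.
Qed.

End Bounds.

Theorem mainTheorem11 (R : realFieldType) (k : nat) (hk : (2 <= k)%N) :
  (forall x : 'I_(dimd k) -> R, in_simplex R (dimd k) x ->
      12 * 3 ^+ (k - 1) - 3 <= Fk R k x)
  /\ in_simplex R (dimd k) (barycenter R k)
  /\ Fk R k (barycenter R k) = 12 * 3 ^+ (k - 1) - 3.
Proof.
split; first exact: Fk_ge.
by split; [exact: barycenter_in_simplex | exact: Fk_barycenter].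
Qed.
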